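(* For all integers $m\ge0$ and $n\ge0$, $$v_m^{(n)}(Y)=\frac{(-1)^m}{m!}\,U(Y)^{bm-m-n+1}\,w_{m+n,bm}(Y).$$
   Context: Let $a,b\ge2$ be integers, $R$ a $\mathbb{Q}$-algebra, $u_0,\ldots,u_a\in R$, and $U(Y)=\sum_{j=0}^au_jY^j\in R[Y]$. Let $I(Y,Z)\in R[[Z]][Y]$ be the formal inverse of $Y+ZU(Y)^b$, i.e. the unique element with $I(Y+ZU(Y)^b,Z)=Y$, and define $v_k(Y)\in R[Y]$ by $U(I(Y,Z))=\sum_{k\ge0}v_k(Y)Z^k$. For each integer $\lambda\ge0$ define $w_{n,\lambda}(Y)\in R[Y]$ recursively by $w_{0,\lambda}(Y)=1/(\lambda+1)$ and $w_{n,\lambda}(Y)=(\lambda-n+2)U'(Y)w_{n-1,\lambda}(Y)+U(Y)w_{n-1,\lambda}'(Y)$ for $n\ge1$. The superscript $(n)$ denotes the $n$-th derivative in $Y$. (When the exponent $bm-m-n+1$ is negative, the right-hand side involves negative powers of $U(Y)$, i.e. it is a formal expression in which $U(Y)$ is inverted.) *)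

From HB Require Import structures.
From mathcomp Require Import all_boot all_order all_algebra.
Set Implicit Arguments. Unset Strict Implicit. Unset Printing Implicit Defensive.
Import GRing.Theory.
Local Open Scope ring_scope.

(* Polynomials in Z with coefficients in R[Y] are
   elements of {poly {poly R}}: the outer variable 'X is Z and
   Y is represented by ('X : {poly R})%:P. *)

Section Defs.
Variable R : comUnitRingType.

Definition is_Q_algebra : Prop := forall k : nat, (k.+1)%:R \is a @GRing.unit R.

Definition trunc_series (I : nat -> {poly R}) (K : nat) : {poly {poly R}} :=
  \sum_(k < K.+1) (I k)%:P * 'X^k.

(* I(Y,Z) = sum_k I k (Y) Z^k is the formal inverse of Y + Z U(Y)^b, i.e.
   I(Y + Z U(Y)^b, Z) = Y in R[Y][[Z]] (checked coefficientwise in Z;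
   only the terms k <= N contribute to the coefficient of Z^N). *)
Definition is_formal_inverse (U : {poly R}) (b : nat) (I : nat -> {poly R}) : Prop :=
  forall N : nat,
    (\sum_(k < N.+1) 'X^k *
       ((I k) ^:P \Po (('X : {poly R})%:P + 'X * (U ^+ b)%:P)))`_N
    = (if N == 0%N then 'X else 0).

(* v_k(Y) = coefficient of Z^k in U(I(Y,Z)). *)
Definition vcoef (U : {poly R}) (I : nat -> {poly R}) (k : nat) : {poly R} :=
  ((map_poly (fun c : R => c%:P%:P) U).[trunc_series I k])`_k.

Fixpoint wpoly (U : {poly R}) (lam : nat) (n : nat) : {poly R} :=
  match n with
  | 0%N => ((lam.+1)%:R)^-1 %:P
  | n'.+1 => ((lam%:Z - n'%:Z + 1)%:~R : R) *: (U^`() * wpoly U lam n')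
             + U * (wpoly U lam n')^`()
  end.

End Defs.

(* Substituting [Y + Z U^b] for [Y] turns [U(I(Y, Z))] back into [U(Y)].  By
   Taylor's formula this is, coefficientwise in [Z], the unitriangular system
   [sum_(k <= N) U^(b(N-k)) v_k^[N-k] = (N == 0) U] in the [v_k], where [p^[j]]
   is [p^(j)/j!].  The polynomials [(-1)^k/(k!(bk+1)) (U^(bk+1))^(k)] solve it:
   [N!] times the [N]-th equation is the alternating binomial sum
   [sum_k (-1)^k C(N,k) W^(N-k) (W^k U')^(N-1)] with [W = U^b], which vanishes.
   Hence [v_m] is that polynomial, and [U^(N-l-1) (U^(l+1))^(N) =
   (l+1) U^(l+1-N) w_(N,l)] follows from the recursion for [w] by induction
   on [N], separately for [N <= l+1] and [N >= l+1]. *)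

From HB Require Import structures.
From mathcomp Require Import all_boot all_order all_algebra.
From mathcomp Require Import ring.
Set Implicit Arguments. Unset Strict Implicit. Unset Printing Implicit Defensive.
Import GRing.Theory.
Local Open Scope ring_scope.

Section Truncation.
Variable R : comNzRingType.

Definition eqmodX (K : nat) (A B : {poly {poly R}}) :=
  forall N, (N <= K)%N -> A`_N = B`_N.

Lemma eqmodXM K A B A' B' :
  eqmodX K A B -> eqmodX K A' B' -> eqmodX K (A * A') (B * B').
Proof.
move=> eqAB eqAB' N NK; rewrite !coefM; apply: eq_bigr => i _.
rewrite eqAB ?eqAB' //; first exact: leq_trans (leq_subr _ _) NK.
exact: leq_trans (leq_ord i) NK.
Qed.

Lemma eqmodX_horner K (p : {poly {poly {poly R}}}) A B :
  eqmodX K A B -> eqmodX K p.[A] p.[B].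
Proof.
move=> eqAB; elim/poly_ind: p => [|p c IHp] N NK; first by rewrite !horner0.
by rewrite !hornerMXaddC !coefD (eqmodXM IHp eqAB).
Qed.

End Truncation.

Section TaylorShift.
Variables (R : comNzRingType) (W : {poly R}).

(* [c(Y) |-> c(Y + Z W)], where [Z] is the outer variable. *)
Definition shiftY : {poly R} -> {poly {poly R}} :=
  comp_poly ('Y + 'X * W%:P) \o map_poly polyC.
HB.instance Definition _ := GRing.RMorphism.on shiftY.

Lemma coef_shiftY c j : (shiftY c)`_j = W ^+ j * c^`N(j).
Proof.
rewrite /shiftY /= /comp_poly.
pose n := maxn (size ((c^:P)^:P)) j.+1.
rewrite (@nderiv_taylor_wide _ n); last exact: leq_maxl; last exact: mulrC.
rewrite coef_sum (bigD1 (Ordinal (leq_maxr (size ((c^:P)^:P)) j.+1))) //= big1.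
  rewrite addr0 !nderivn_map horner_map /= -/(comp_poly 'X _) comp_polyXr.
  by rewrite exprMn -rmorphXn /= coefCM coefXnM ltnn subnn coefC /= mulrC.
move=> i /negbTE ne.
rewrite !nderivn_map horner_map /= -/(comp_poly 'X _) comp_polyXr.
rewrite exprMn -rmorphXn /= coefCM coefXnM.
case: ltnP => [_ | ji]; first by rewrite mulr0.
rewrite coefC subn_eq0; case: (leqP j i) => [ij | _]; last by rewrite mulr0.
by move: ne; rewrite -(inj_eq val_inj) /= eqn_leq ij ji.
Qed.

Definition shift_coef (g : nat -> {poly R}) N :=
  \sum_(k < N.+1) W ^+ (N - k) * (g k)^`N(N - k).

Lemma coef_shift_series (g : nat -> {poly R}) K N : (N <= K)%N ->
  (\sum_(k < K.+1) 'X^k * shiftY (g k))`_N = shift_coef g N.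
Proof.
move=> NK; rewrite /shift_coef coef_sum.
rewrite (big_ord_widen K.+1 (fun k => W ^+ (N - k) * (g k)^`N(N - k))) //.
rewrite [RHS]big_mkcond; apply: eq_bigr => k _.
by rewrite coefXnM coef_shiftY ltnS ltnNge; case: leqP.
Qed.

(* [g N] enters [shift_coef g N] with coefficient 1, and no [g k] with [k > N] does. *)
Lemma shift_coef_inj (g h : nat -> {poly R}) : shift_coef g =1 shift_coef h -> g =1 h.
Proof.
move=> eq_gh; elim/ltn_ind => N IH.
have := eq_gh N; rewrite /shift_coef !big_ord_recr /= subnn expr0 !mul1r.
rewrite !nderivn0; under eq_bigr => k _ do rewrite (IH k (ltn_ord k)).
exact: addrI.
Qed.

(* [F(Y, Z) |-> F(Y + Z W, Z)] *)
Definition shiftYZ : {poly {poly R}} -> {poly {poly R}} :=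
  horner_eval 'X \o map_poly shiftY.
HB.instance Definition _ := GRing.RMorphism.on shiftYZ.

Lemma shiftYZC (c : {poly R}) : shiftYZ c%:P = shiftY c.
Proof. by rewrite /shiftYZ /= map_polyC /= horner_evalE hornerC. Qed.

Lemma shiftYZX : shiftYZ 'X = 'X.
Proof. by rewrite /shiftYZ /= map_polyX /= horner_evalE hornerX. Qed.

Lemma shiftYZ_CC (c : R) : shiftYZ (c%:P)%:P = (c%:P)%:P.
Proof. by rewrite shiftYZC /shiftY /= map_polyC /= comp_polyC. Qed.

Lemma shiftYZ_series (g : nat -> {poly R}) K :
  shiftYZ (\sum_(k < K.+1) (g k)%:P * 'X^k) = \sum_(k < K.+1) 'X^k * shiftY (g k).
Proof.
rewrite rmorph_sum; apply: eq_bigr => k _.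
by rewrite rmorphM rmorphXn /= shiftYZC shiftYZX mulrC.
Qed.

Lemma shiftYZ_horner (p : {poly R}) A :
  shiftYZ (map_poly (fun c => (c%:P)%:P) p).[A] =
  (map_poly (fun c => (c%:P)%:P) p).[shiftYZ A].
Proof.
rewrite -horner_map -map_poly_comp; congr (_.[_]).
by apply: eq_map_poly => c /=; rewrite shiftYZ_CC.
Qed.

(* [shiftYZ] does not lower [Z]-degrees. *)
Lemma eqmodX_shiftYZ K A B : eqmodX K A B -> eqmodX K (shiftYZ A) (shiftYZ B).
Proof.
move=> eqAB.
have take_eq : take_poly K.+1 A = take_poly K.+1 B.
  by apply/polyP => i; rewrite !coef_take_poly; case: ltnP => // /eqAB ->.
rewrite -(poly_take_drop K.+1 A) -(poly_take_drop K.+1 B) take_eq => N NK.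
by rewrite !rmorphD !rmorphM !coefD !rmorphXn /= shiftYZX !coefMXn ltnS NK.
Qed.

End TaylorShift.

Lemma coef_trunc_series (R : comUnitRingType) (g : nat -> {poly R}) K N :
  (trunc_series g K)`_N = if (N <= K)%N then g N else 0.
Proof.
rewrite /trunc_series coef_sum.
case: leqP => [NK | KN].
  rewrite (bigD1 (Ordinal (NK : (N < K.+1)%N))) //= big1.
    by rewrite coefCM coefXn eqxx mulr1 addr0.
  move=> i ne; rewrite coefCM coefXn.
  by move: ne; rewrite -(inj_eq val_inj) /= eq_sym => /negbTE ->; rewrite mulr0.
rewrite big1 // => i _; rewrite coefCM coefXn.
have /negbTE -> : N != i by rewrite neq_ltn (leq_ltn_trans (leq_ord i) KN) orbT.
by rewrite mulr0.
Qed.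

Section FormalInverse.
Variables (R : comUnitRingType) (U : {poly R}) (b : nat) (I : nat -> {poly R}).
Hypothesis inverseI : is_formal_inverse U b I.

Lemma shift_coef_inverse N : shift_coef (U ^+ b) I N = if N == 0%N then 'X else 0.
Proof. by rewrite -(coef_shift_series _ _ (leqnn N)); exact: inverseI. Qed.

Lemma shift_coef_vcoef N :
  shift_coef (U ^+ b) (vcoef U I) N = if N == 0%N then U else 0.
Proof.
set Ucc := map_poly (fun c : R => (c%:P)%:P) U.
have shiftI : eqmodX N (shiftYZ (U ^+ b) (trunc_series I N)) 'Y.
  move=> k kN; rewrite shiftYZ_series coef_shift_series //.
  by rewrite shift_coef_inverse coefC.
have truncv : eqmodX N (trunc_series (vcoef U I) N) Ucc.[trunc_series I N].
  move=> k kN; rewrite coef_trunc_series kN /vcoef -/Ucc.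
  apply: eqmodX_horner (leqnn k) => j jk.
  by rewrite !coef_trunc_series jk (leq_trans jk kN).
have UccY : Ucc.['Y] = U%:P.
  rewrite /Ucc (map_poly_comp polyC polyC) horner_map /=.
  by rewrite -/(comp_poly 'X U) comp_polyXr.
rewrite -(coef_shift_series _ _ (leqnn N)) -shiftYZ_series -/(trunc_series _ N).
rewrite (eqmodX_shiftYZ _ truncv (leqnn N)) shiftYZ_horner.
by rewrite (eqmodX_horner _ shiftI (leqnn N)) UccY coefC.
Qed.

End FormalInverse.

Section AlternatingSum.
Variables (R : comNzRingType) (W : {poly R}).

Definition alt_deriv_sum N n (F : {poly R}) := \sum_(k < N.+1)
  ((-1) ^+ k *+ 'C(N, k)) *: (W ^+ (N - k) * (W ^+ k * F)^`(n)).

Lemma deriv_alt_deriv_sum N n F : (alt_deriv_sum N.+1 n F)^`() =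
  alt_deriv_sum N.+1 n.+1 F + (W^`() * alt_deriv_sum N n F) *+ N.+1.
Proof.
rewrite /alt_deriv_sum raddf_sum /=.
under eq_bigr => k _ do rewrite derivZ derivM -derivnS scalerDr addrC.
rewrite big_split /=; congr (_ + _).
rewrite big_ord_recr /= subnn expr0 derivC mul0r scaler0 addr0.
rewrite mulr_sumr -sumrMnl; apply: eq_bigr => k _.
rewrite deriv_exp subSn ?(leq_ord k) //=.
rewrite mulrnAl -scalerMnr scalerMnl -scalerAr -!scalerMnl -!mulrnA mulrA.
congr (_ *+ _).
have := mul_bin_down N.+1 k; rewrite /= subSn ?(leq_ord k) // mulnC => ->.
by rewrite mulnC.
Qed.

(* Induction on [n] through [deriv_alt_deriv_sum]; for [n = 0] the sum is [(1 - 1)^N W^N F]. *)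
Lemma alt_deriv_sum_eq0 n N F : (n < N)%N -> alt_deriv_sum N n F = 0.
Proof.
elim: n N => [|n IH] [|N] // ltnN.
  rewrite /alt_deriv_sum.
  under eq_bigr => k _ do rewrite derivn0 mulrA -exprD subnK ?(leq_ord k) //.
  rewrite -scaler_suml.
  have -> : \sum_(k < N.+2) (-1) ^+ k *+ 'C(N.+1, k) = (1 + (-1)) ^+ N.+1 :> R.
    by rewrite exprDn; apply: eq_bigr => k _; rewrite expr1n mul1r.
  by rewrite subrr expr0n scale0r.
have := deriv_alt_deriv_sum N n F.
by rewrite !IH ?deriv0 ?mulr0 ?mul0rn ?addr0 // ltnW.
Qed.

End AlternatingSum.

Lemma derivn_derivn (R : nzRingType) (p : {poly R}) m n : p^`(m)^`(n) = p^`(n + m).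
Proof. by rewrite /derivn iterD. Qed.

Section LagrangeInversion.
Variables (R : comUnitRingType) (U : {poly R}) (b : nat).
Hypothesis QR : is_Q_algebra R.

Lemma natr_unit n : (0 < n)%N -> n%:R \is a @GRing.unit R.
Proof. by move=> n_gt0; rewrite -(prednK n_gt0); apply: QR. Qed.

Lemma fact_unit n : n`!%:R \is a @GRing.unit R.
Proof. exact/natr_unit/fact_gt0. Qed.

Lemma nderivnE (p : {poly R}) n : p^`N(n) = (n`!%:R)^-1 *: p^`(n).
Proof. by rewrite nderivn_def -scaler_nat scalerA mulVr ?fact_unit // scale1r. Qed.

Definition lagrange_coef k : {poly R} :=
  ((-1) ^+ k * (k`!%:R)^-1 * ((b * k).+1%:R)^-1) *: (U ^+ (b * k).+1)^`(k).

Lemma shift_coef_lagrange N :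
  shift_coef (U ^+ b) lagrange_coef N = if N == 0%N then U else 0.
Proof.
case: N => [|N] /=.
  rewrite /shift_coef big_ord1 /lagrange_coef muln0 nderivn0 derivn0 subnn.
  by rewrite !expr0 !mul1r invr1 mulr1 expr1 scale1r.
(* [(U^(bk+1))^(N+1) = (bk+1) (U^(bk) U')^(N)], which turns [(N+1)!] times
   the equation into an alternating binomial sum. *)
have -> : shift_coef (U ^+ b) lagrange_coef N.+1 =
    (N.+1`!%:R)^-1 *: alt_deriv_sum (U ^+ b) N.+1 N U^`().
  rewrite /shift_coef /alt_deriv_sum scaler_sumr; apply: eq_bigr => k _.
  have le_k_N := leq_ord k.
  rewrite nderivnE /lagrange_coef derivnZ derivn_derivn subnK // derivSn deriv_exp /=.
  rewrite -scaler_nat derivnZ [U ^+ (b * k)]exprM [U^`() * _]mulrC.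
  rewrite -!scalerAr !scalerA; congr (_ *: _).
  have unitC : 'C(N.+1, k)%:R \is a @GRing.unit R by rewrite natr_unit ?bin_gt0.
  rewrite -(bin_fact le_k_N) !natrM !invrM ?unitrM ?fact_unit ?unitC //.
  rewrite -mulrA mulrVK ?QR // -(mulr_natr ((-1) ^+ k)) [_ * 'C(_, _)%:R]mulrC.
  by rewrite [RHS]mulrA mulrVK // mulrA mulrAC.
by rewrite alt_deriv_sum_eq0 // scaler0.
Qed.

End LagrangeInversion.

Lemma mul_deriv_exp (R : comNzRingType) (p : {poly R}) n :
  p * (p ^+ n)^`() = p^`() * p ^+ n *+ n.
Proof.
rewrite deriv_exp; case: n => [|n]; first by rewrite !mulr0n mulr0.
by rewrite mulrnAr mulrCA -exprS.
Qed.

Section WPoly.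
Variables (R : comUnitRingType) (U : {poly R}) (lam : nat).
Hypothesis unit_lam : lam.+1%:R \is a @GRing.unit R.

Lemma wpolyS N : wpoly U lam N.+1 =
  (lam.+1%:R - N%:R) *: (U^`() * wpoly U lam N) + U * (wpoly U lam N)^`().
Proof. by rewrite /= intrD intrB /= -natr1 addrAC. Qed.

Lemma derivn_exp_wpoly_le N : (N <= lam.+1)%N ->
  (U ^+ lam.+1)^`(N) = lam.+1%:R *: (U ^+ (lam.+1 - N) * wpoly U lam N).
Proof.
elim: N => [_ | N IH lt_N_lam].
  by rewrite derivn0 subn0 /= scalerAr scale_polyC mulrV // mulr1.
have le_N_lam : (N <= lam)%N := lt_N_lam.
rewrite derivnS IH 1?ltnW // wpolyS derivZ derivM subSS (subSn le_N_lam).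
rewrite deriv_exp -natrB 1?ltnW // (subSn le_N_lam) -!mul_polyC polyC_natr.
by rewrite exprS; ring.
Qed.

Lemma derivn_exp_wpoly_ge d :
  U ^+ d * (U ^+ lam.+1)^`(lam.+1 + d) = lam.+1%:R *: wpoly U lam (lam.+1 + d).
Proof.
elim: d => [|d IH].
  by rewrite expr0 mul1r addn0 derivn_exp_wpoly_le // subnn expr0 mul1r.
have dIH := congr1 deriv IH; rewrite derivM derivZ -derivnS in dIH.
rewrite addnS wpolyS.
have -> : (lam.+1%:R - (lam.+1 + d)%:R : R) = - d%:R.
  by rewrite natrD opprD addrA subrr add0r.
have eD : U ^+ d * (U ^+ lam.+1)^`((lam.+1 + d).+1) = lam.+1%:R *:
    (wpoly U lam (lam.+1 + d))^`() - (U ^+ d)^`() * (U ^+ lam.+1)^`(lam.+1 + d).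
  by rewrite -dIH addrC addKr.
rewrite exprS -mulrA eD mulrBr mulrA mul_deriv_exp mulrnAl -mulrA IH.
by rewrite scaleNr !scaler_nat; ring.
Qed.

Lemma derivn_exp_wpoly N : U ^+ (N - lam.+1) * (U ^+ lam.+1)^`(N) =
  lam.+1%:R *: (U ^+ (lam.+1 - N) * wpoly U lam N).
Proof.
have [le_N_lam | lt_lam_N] := leqP N lam.+1.
  have /eqP -> : (N - lam.+1 == 0)%N by rewrite subn_eq0.
  by rewrite expr0 mul1r derivn_exp_wpoly_le.
have /eqP -> : (lam.+1 - N == 0)%N by rewrite subn_eq0 ltnW.
by rewrite expr0 mul1r; have := derivn_exp_wpoly_ge (N - lam.+1); rewrite subnKC // ltnW.
Qed.

End WPoly.

Theorem mainTheorem8 (R : comUnitRingType) (a b : nat) (U : {poly R})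
    (I : nat -> {poly R}) :
  is_Q_algebra R -> (2 <= a)%N -> (2 <= b)%N -> (size U <= a.+1)%N ->
  is_formal_inverse U b I ->
  forall m n : nat,
    U ^+ ((m + n) - (b * m).+1) * (vcoef U I m)^`(n)
    = ((-1) ^+ m * (m`!%:R)^-1) *:
        (U ^+ ((b * m).+1 - (m + n)) * wpoly U (b * m) (m + n)).
Proof.
move=> QR _ _ _ inverseI m n.
have -> : vcoef U I m = lagrange_coef U b m.
  apply: (shift_coef_inj (W := U ^+ b)) => N.
  by rewrite shift_coef_vcoef // shift_coef_lagrange.
rewrite /lagrange_coef derivnZ derivn_derivn addnC -scalerAr derivn_exp_wpoly ?QR //.
by rewrite scalerA divrK ?QR.
Qed.
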